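(* Fix $N\in\mathbb{N}$, a constant $0<\alpha\le 1$, and for each $k\in\{0,\dots,N-1\}$ matrices $A_k\in\mathbb{R}^{n_x\times n_x}$, $B_k\in\mathbb{R}^{n_x\times n_u}$, $F_k\in\mathbb{R}^{n_x\times n_w}$, $E_k\in\mathbb{R}^{n_x\times n_p}$, $C_k\in\mathbb{R}^{n_q\times n_x}$, $D_k\in\mathbb{R}^{n_q\times n_u}$, $G_k\in\mathbb{R}^{n_q\times n_w}$ and a constant $\gamma_k>0$. Suppose there exist $Q_k\in\mathbb{S}^{n_x}_{++}$ for $k\in\{0,\dots,N\}$, and, for $k\in\{0,\dots,N-1\}$, matrices $Y_k\in\mathbb{R}^{n_u\times n_x}$ and scalars $\nu^p_k>0$, $\lambda^w_k>0$ such that for all $k\in\{0,\dots,N-1\}$ $$\begin{bmatrix} \alpha Q_k-\lambda^w_k Q_k & * & * & * & *\\ 0 & \nu^p_k I_{n_p} & * & * & *\\ 0 & 0 & \lambda^w_k I_{n_w} & * & *\\ A_kQ_k+B_kY_k & \nu^p_k E_k & F_k & Q_{k+1} & *\\ C_kQ_k+D_kY_k & 0 & G_k & 0 & \frac{\nu^p_k}{\gamma_k^2} I_{n_q} \end{bmatrix}\succeq 0 .$$ Let $K_k=Y_kQ_k^{-1}$, $A^{cl}_k=A_k+B_kK_k$, $C^{cl}_k=C_k+D_kK_k$. Then for every $k\in\{0,\dots,N-1\}$ and every $\eta\in\mathbb{R}^{n_x}$, $\delta p\in\mathbb{R}^{n_p}$, $w\in\mathbb{R}^{n_w}$ satisfying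 $$\|\delta p\|_2\le\gamma_k\|C^{cl}_k\eta+G_kw\|_2\quad\text{and}\quad \eta^\top Q_k^{-1}\eta\ \ge\ \|w\|_2^2,$$ the vector $\eta^+=A^{cl}_k\eta+F_kw+E_k\delta p$ satisfies $$(\eta^+)^\top Q_{k+1}^{-1}\eta^+\ \le\ \alpha\,\eta^\top Q_k^{-1}\eta .$$
   Context: Here $\mathbb{S}^n_{++}$ denotes the set of symmetric positive definite $n\times n$ matrices, and in a symmetric block matrix the symbol $*$ denotes the block determined by symmetry (i.e. the transpose of the corresponding lower-triangular block). $I_m$ is the $m\times m$ identity. The conclusion is the ''Lyapunov condition'' for the quadratic function $V(k,\eta)=\eta^\top Q_k^{-1}\eta$ along the discrete-time difference closed-loop system $\eta_{k+1}=A^{cl}_k\eta_k+F_kw_k+E_k\delta p_k$, $\delta q_k=C^{cl}_k\eta_k+G_kw_k$, in which the nonlinearity satisfies the Lipschitz-type bound $\|\delta p_k\|_2\le\gamma_k\|\delta q_k\|_2$. *)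

From HB Require Import structures.
From mathcomp Require Import all_boot all_order all_algebra.
Set Implicit Arguments. Unset Strict Implicit. Unset Printing Implicit Defensive.
Import Order.TTheory GRing.Theory Num.Theory.
Local Open Scope ring_scope.

Definition psd (R : realFieldType) (n : nat) (M : 'M[R]_n) : Prop :=
  M^T = M /\ forall x : 'cV[R]_n, 0 <= (x^T *m M *m x) 0 0.

Definition posdef (R : realFieldType) (n : nat) (M : 'M[R]_n) : Prop :=
  M^T = M /\ forall x : 'cV[R]_n, x != 0 -> 0 < (x^T *m M *m x) 0 0.

Definition norm2 (R : rcfType) (n : nat) (v : 'cV[R]_n) : R :=
  Num.sqrt (\sum_(i < n) v i 0 ^+ 2).

Definition qform (R : ringType) (n : nat) (P : 'M[R]_n) (x : 'cV[R]_n) : R :=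
  (x^T *m P *m x) 0 0.

Definition lmi_mx (R : fieldType) (nx nu nw np nq : nat) (alpha lam nup gam : R)
  (A : 'M[R]_nx) (B : 'M[R]_(nx, nu)) (F : 'M[R]_(nx, nw)) (E : 'M[R]_(nx, np))
  (C : 'M[R]_(nq, nx)) (D : 'M[R]_(nq, nu)) (G : 'M[R]_(nq, nw))
  (Qk Qk1 : 'M[R]_nx) (Y : 'M[R]_(nu, nx))
  : 'M[R]_(nx + (np + (nw + (nx + nq)))) :=
  let AQ := A *m Qk + B *m Y in
  let CQ := C *m Qk + D *m Y in
  col_mx
    (row_mx ((alpha - lam) *: Qk) (row_mx 0 (row_mx 0 (row_mx AQ^T CQ^T))))
  (col_mx
    (row_mx 0 (row_mx (nup%:M : 'M[R]_np) (row_mx 0 (row_mx (nup *: E)^T 0))))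
  (col_mx
    (row_mx 0 (row_mx 0 (row_mx (lam%:M : 'M[R]_nw) (row_mx F^T G^T))))
  (col_mx
    (row_mx AQ (row_mx (nup *: E) (row_mx F (row_mx Qk1 0))))
    (row_mx CQ (row_mx 0 (row_mx G (row_mx 0 ((nup / gam ^+ 2)%:M : 'M[R]_nq)))))))).

From HB Require Import structures.
From mathcomp Require Import all_boot all_order all_algebra.
From mathcomp Require Import ring lra.

Set Implicit Arguments.
Unset Strict Implicit.
Unset Printing Implicit Defensive.

Import Order.TTheory GRing.Theory Num.Theory.
Local Open Scope ring_scope.

(* Evaluate the quadratic form of the LMI at the test vector
     x = (Q_k^-1 eta, dp / nu, w, - Q_{k+1}^-1 eta+, - (gam^2 / nu) q),
   where q = Ccl eta + G w.  Its last two block rows are built so that the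
   matrix-vector product vanishes there (they are the closed-loop equations
   for eta+ and q), and what remains is
     0 <= (alpha - lam) V_k(eta) + |dp|^2 / nu + lam |w|^2
          - V_{k+1}(eta+) - (gam^2 / nu) |q|^2.
   The constraint |dp| <= gam |q| cancels the dp and q terms, and
   |w|^2 <= V_k(eta) absorbs lam |w|^2 into lam V_k(eta). *)

Lemma posdef_unitmx (R : realFieldType) n (M : 'M[R]_n) :
  posdef M -> M \in unitmx.
Proof.
case=> _ M_pos; rewrite unitmxE unitfE; apply/negP => /det0P [v v_neq0 vM0].
have := M_pos v^T; rewrite trmx_eq0 v_neq0 trmxK vM0 mul0mx mxE ltxx.
by move/(_ isT).
Qed.

Lemma qform_tr (R : comNzRingType) n (M : 'M[R]_n) x : qform M^T x = qform M x.
Proof.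
rewrite /qform; transitivity ((x^T *m M *m x)^T 0 0); last by rewrite mxE.
by rewrite !trmx_mul trmxK mulmxA.
Qed.

Lemma norm2_ge0 (R : rcfType) n (v : 'cV[R]_n) : 0 <= norm2 v.
Proof. exact: sqrtr_ge0. Qed.

Lemma sqr_norm2 (R : rcfType) n (v : 'cV[R]_n) : norm2 v ^+ 2 = (v^T *m v) 0 0.
Proof.
rewrite sqr_sqrtr; last by apply: sumr_ge0 => i _; apply: sqr_ge0.
by rewrite mxE; apply: eq_bigr => i _; rewrite mxE expr2.
Qed.

Section LmiTestVector.

Variables (R : realFieldType) (nx nu nw np nq : nat) (alpha lam nup gam : R).
Variables (A : 'M[R]_nx) (B : 'M[R]_(nx, nu)) (F : 'M[R]_(nx, nw)).
Variables (E : 'M[R]_(nx, np)) (C : 'M[R]_(nq, nx)) (D : 'M[R]_(nq, nu)).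
Variables (G : 'M[R]_(nq, nw)) (Qk Qk1 : 'M[R]_nx) (Y : 'M[R]_(nu, nx)).
Hypotheses (Qk_unit : Qk \in unitmx) (Qk1_unit : Qk1 \in unitmx).
Hypotheses (nup_neq0 : nup != 0) (gam_neq0 : gam != 0).
Variables (eta : 'cV[R]_nx) (dp : 'cV[R]_np) (w : 'cV[R]_nw).

Let M := lmi_mx alpha lam nup gam A B F E C D G Qk Qk1 Y.
Let K := Y *m invmx Qk.
Let Acl := A + B *m K.
Let Ccl := C + D *m K.
Let etap := Acl *m eta + F *m w + E *m dp.
Let q := Ccl *m eta + G *m w.
Let s := gam ^+ 2 / nup.
Let z := invmx Qk1 *m etap.

Let x := col_mx (invmx Qk *m eta)
           (col_mx (nup^-1 *: dp) (col_mx w (col_mx (- z) (- (s *: q))))).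

Lemma mulmx_closed_loop m (P : 'M[R]_(m, nx)) (S : 'M[R]_(m, nu)) :
  (P *m Qk + S *m Y) *m (invmx Qk *m eta) = (P + S *m K) *m eta.
Proof.
by rewrite mulmxDl -!mulmxA !(mulmxA Qk) mulmxV // mul1mx mulmxDl /K !mulmxA.
Qed.

Lemma lmi_mx_mul_test_vector :
  M *m x =
  col_mx ((alpha - lam) *: eta - (A *m Qk + B *m Y)^T *m z
            - s *: ((C *m Qk + D *m Y)^T *m q))
  (col_mx (dp - (nup *: E)^T *m z)
  (col_mx (lam *: w - F^T *m z - s *: (G^T *m q)) 0)).
Proof.
rewrite /M /lmi_mx !mul_col_mx !mul_row_col !mul0mx !addr0 !add0r.
congr col_mx; last congr col_mx; last congr col_mx.
- by rewrite -scalemxAl mulmxA mulmxV // mul1mx !mulmxN -scalemxAr addrA.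
- by rewrite mul_scalar_mx scalerA mulfV // scale1r mulmxN.
- by rewrite mul_scalar_mx !mulmxN -scalemxAr addrA.
have s_inv : nup / gam ^+ 2 * s = 1.
  by rewrite /s mulrA divfK ?mulfV // expf_neq0.
rewrite !mulmx_closed_loop -scalemxAl -scalemxAr scalerA mulfV // scale1r.
rewrite mulmxN /z (mulmxA Qk1) mulmxV // mul1mx mul_scalar_mx scalerN.
rewrite scalerA s_inv scale1r -/Acl -/Ccl /etap !addrA.
by rewrite [_ + F *m w + E *m dp]addrAC subrr -/q subrr col_mx0.
Qed.

Lemma qform_lmi_mx_test_vector :
  qform M x = (alpha - lam) * qform (invmx Qk) eta + nup^-1 * (dp^T *m dp) 0 0
    + lam * (w^T *m w) 0 0 - qform (invmx Qk1) etap - s * (q^T *m q) 0 0.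
Proof.
rewrite -(qform_tr (invmx Qk)) /qform -mulmxA lmi_mx_mul_test_vector /x.
rewrite -(mulmxA etap^T) -/z.
have etapT :
    etap^T *m z = (Acl *m eta)^T *m z + (F *m w)^T *m z + (E *m dp)^T *m z.
  by rewrite /etap !linearD /= !mulmxDl.
have qT : q^T *m q = (Ccl *m eta)^T *m q + (G *m w)^T *m q.
  by rewrite /q [(_ + _)^T]linearD /= (mulmxDl (Ccl *m eta)^T).
rewrite etapT qT; clearbody z q.
rewrite !tr_col_mx !mul_row_col mulmx0 addr0 !mulmxBr -!scalemxAr !mulmxA.
rewrite -!trmx_mul !mulmx_closed_loop -!scalemxAl -!scalemxAr scalerA mulfV //.
rewrite scale1r !linearZ /= -!scalemxAl !mxE.
ring.
Qed.

Lemma lmi_mx_psd_dissipation :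
  psd M -> qform (invmx Qk1) etap + s * (q^T *m q) 0 0
    <= (alpha - lam) * qform (invmx Qk) eta + nup^-1 * (dp^T *m dp) 0 0
       + lam * (w^T *m w) 0 0.
Proof.
case=> _ /(_ x); rewrite -/(qform M x) qform_lmi_mx_test_vector => ge0.
by rewrite -subr_ge0 opprD addrA.
Qed.

End LmiTestVector.

Theorem theorem1 (R : rcfType) (N nx nu nw np nq : nat) (alpha : R)
  (A : nat -> 'M[R]_nx) (B : nat -> 'M[R]_(nx, nu))
  (F : nat -> 'M[R]_(nx, nw)) (E : nat -> 'M[R]_(nx, np))
  (C : nat -> 'M[R]_(nq, nx)) (D : nat -> 'M[R]_(nq, nu))
  (G : nat -> 'M[R]_(nq, nw)) (gam : nat -> R)
  (Q : nat -> 'M[R]_nx) (Y : nat -> 'M[R]_(nu, nx)) (nup lam : nat -> R) :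
  0 < alpha -> alpha <= 1 ->
  (forall k, (k < N)%N -> 0 < gam k) ->
  (forall k, (k <= N)%N -> posdef (Q k)) ->
  (forall k, (k < N)%N -> 0 < nup k) ->
  (forall k, (k < N)%N -> 0 < lam k) ->
  (forall k, (k < N)%N ->
     psd (lmi_mx alpha (lam k) (nup k) (gam k) (A k) (B k) (F k) (E k)
                 (C k) (D k) (G k) (Q k) (Q k.+1) (Y k))) ->
  forall k, (k < N)%N ->
  let K := Y k *m invmx (Q k) in
  let Acl := A k + B k *m K in
  let Ccl := C k + D k *m K in
  forall (eta : 'cV[R]_nx) (dp : 'cV[R]_np) (w : 'cV[R]_nw),
    norm2 dp <= gam k * norm2 (Ccl *m eta + G k *m w) ->
    norm2 w ^+ 2 <= qform (invmx (Q k)) eta ->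
    let etap := Acl *m eta + F k *m w + E k *m dp in
    qform (invmx (Q k.+1)) etap <= alpha * qform (invmx (Q k)) eta.
Proof.
move=> _ _ gam_gt0 Q_pd nup_gt0 lam_gt0 lmi_psd k k_lt_N K Acl Ccl eta dp w.
move=> dp_le w_le; cbv zeta.
have nup_pos := nup_gt0 k k_lt_N; have gam_pos := gam_gt0 k k_lt_N.
have Qk_unit := posdef_unitmx (Q_pd k (ltnW k_lt_N)).
have Qk1_unit := posdef_unitmx (Q_pd k.+1 k_lt_N).
have := lmi_mx_psd_dissipation Qk_unit Qk1_unit (lt0r_neq0 nup_pos)
  (lt0r_neq0 gam_pos) eta dp w (lmi_psd k k_lt_N).
rewrite -!sqr_norm2 -/K -/Acl -/Ccl.
have dp_sqr_le :
    norm2 dp ^+ 2 <= (gam k * norm2 (Ccl *m eta + G k *m w)) ^+ 2.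
  by rewrite ler_sqr ?nnegrE ?mulr_ge0 ?norm2_ge0 ?(ltW gam_pos).
have inv_nup_ge0 : 0 <= (nup k)^-1 by rewrite invr_ge0 ltW.
have := ler_wpM2l inv_nup_ge0 dp_sqr_le.
have w_sqr_le := ler_wpM2l (ltW (lam_gt0 k k_lt_N)) w_le.
lra.
Qed.
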